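(* Let $n\geqslant2$. Then $\mathrm{SR}(n+1,n)=\binom{n+3}{3}$ and $\mathrm{SR}(n,n)=\binom{n+3}{3}-\left\lfloor\frac{n+2}{2}\right\rfloor\left\lceil\frac{n+2}{2}\right\rceil$.
   Context: Let $p,q$ be distinct primes and $n,m$ positive integers. In $C_{p^nq^m}$ let $C_{p^aq^x}$ be the unique subgroup of order $p^aq^x$, and write $(a,x;b,y)$ for the pair of subgroups $(C_{p^aq^x},C_{p^bq^y})$ with $0\leqslant a\leqslant b\leqslant n$, $0\leqslant x\leqslant y\leqslant m$, $(a,x)\neq(b,y)$. Its midpoint is $(a+x+b+y)/2$, and $R_M$ is the set of all such pairs with midpoint $M$. The simple rainbow number $\mathrm{SR}(n,m)$ is $|R_{(n+m)/2}|$ if $n+m$ is odd, and $|R_{(n+m-1)/2}|$ (which equals $|R_{(n+m+1)/2}|$) if $n+m$ is even. *)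

From mathcomp Require Import all_boot.
Set Implicit Arguments. Unset Strict Implicit. Unset Printing Implicit Defensive.

(* A pair (a,x;b,y) of subgroups (C_{p^a q^x}, C_{p^b q^y}) of C_{p^n q^m},
   encoded by the exponent quadruple (a,x,b,y) with a,b <= n and x,y <= m. *)
Definition is_pair (n m : nat) (t : 'I_n.+1 * 'I_m.+1 * 'I_n.+1 * 'I_m.+1) : bool :=
  let: (a, x, b, y) := t in
  [&& (a <= b)%N, (x <= y)%N & ((a : nat), (x : nat)) != ((b : nat), (y : nat))].

(* |R_M| where the midpoint M is given through twoM = 2*M,
   i.e. a + x + b + y = twoM. *)
Definition R_card (n m twoM : nat) : nat :=
  #|[set t : 'I_n.+1 * 'I_m.+1 * 'I_n.+1 * 'I_m.+1 |
       is_pair t && (let: (a, x, b, y) := t in (a + x + b + y == twoM)%N)]|.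

Definition SR (n m : nat) : nat :=
  if odd (n + m) then R_card n m (n + m) else R_card n m (n + m - 1).

From mathcomp Require Import all_boot zify.

(* Both rainbow numbers are taken on an odd level a + x + b + y, where
   (a,x) = (b,y) is impossible, so they count the quadruples with a <= b and
   x <= y on that level.  Subtracting 1 from b and y identifies the quadruples
   with a < b and x < y in the box [0,N+1] x [0,M+1] at level T + 2 with all
   quadruples in [0,N] x [0,M] at level T.  On the middle level, the remaining
   quadruples (a = b, or x = y) correspond to the pairs u < v with u + v odd
   taken from one side of the box; for two consecutive side lengths these
   pairs number C(k+1, 2) together, and an induction on n along the middle
   levels yields both binomial formulas. *)

Definition level_count (R S : rel nat) (N M T : nat) : nat :=
  \sum_(a < N.+1) \sum_(x < M.+1) \sum_(b < N.+1) \sum_(y < M.+1)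
     ([&& R a b, S x y & a + x + b + y == T] : nat).

Definition odd_pairs (m : nat) : nat :=
  \sum_(u < m) \sum_(v < m) ([&& u < v & odd (u + v)] : nat).

Lemma sum_ord_eqn_and (L i : nat) (P : pred nat) :
  \sum_(j < L) (eqn i j && P j : nat) = (i < L) && P i.
Proof.
rewrite (eq_bigr (fun j : 'I_L => if P j && (j == i :> nat) then 1 else 0)).
  by rewrite -big_mkcond (big_ord1_cond_eq _ (fun=> 1)); case: (_ && _).
by move=> j _; rewrite -[eqn _ _]/(i == j) eq_sym andbC; case: (_ && _).
Qed.

Lemma sum_ord_double_eq (L s K : nat) :
  \sum_(a < L) (a.*2 + s == K : nat) = [&& s <= K, ~~ odd (K - s) & (K - s)./2 < L].
Proof.
rewrite (eq_bigr (fun a : 'I_L => eqn (K - s)./2 a && ((s <= K) && ~~ odd (K - s)) : nat)).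
  by rewrite (sum_ord_eqn_and _ _ (fun=> (s <= K) && ~~ odd (K - s))); lia.
by move=> a _; lia.
Qed.

Lemma level_count_split N M T :
  level_count leq leq N M T =
  level_count ltn ltn N M T + level_count eqn leq N M T + level_count ltn eqn N M T.
Proof.
rewrite /level_count -!big_split; apply: eq_bigr => a _.
rewrite -!big_split; apply: eq_bigr => x _.
rewrite -!big_split; apply: eq_bigr => b _.
by rewrite -!big_split; apply: eq_bigr => y _ /=; lia.
Qed.

Lemma level_count_shift N M T :
  level_count ltn ltn N.+1 M.+1 T.+2 = level_count leq leq N M T.
Proof.
rewrite /level_count big_ord_recr /= [X in _ + X]big1 ?addn0; last first.
  by move=> x _; apply: big1 => b _; apply: big1 => y _; have := ltn_ord b; lia.
apply: eq_bigr => a _.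
rewrite big_ord_recr /= [X in _ + X]big1 ?addn0; last first.
  by move=> b _; apply: big1 => y _; have := ltn_ord y; lia.
apply: eq_bigr => x _.
rewrite big_ord_recl big1 ?add0n //; apply: eq_bigr => b _.
rewrite big_ord_recl /= andbF add0n; apply: eq_bigr => y _.
by rewrite /bump /=; lia.
Qed.

Lemma level_count_eqn_leq N M T : odd T -> M.*2 <= T.+1 -> T <= N.*2.+1 ->
  level_count eqn leq N M T = odd_pairs M.+1.
Proof.
move=> oddT leMT leTN; rewrite /level_count /odd_pairs exchange_big /=.
apply: eq_bigr => x _.
under eq_bigr => a _.
  rewrite exchange_big /=.
  under eq_bigr => y _
    do rewrite (sum_ord_eqn_and _ _ (fun b => (x <= y) && (a + x + b + y == T))) ltn_ord.
  over.
rewrite exchange_big /=; apply: eq_bigr => y _.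
have -> : \sum_(a < N.+1) ([&& x <= y & a + x + a + y == T] : nat)
        = (x <= y) * \sum_(a < N.+1) (a.*2 + (x + y) == T : nat).
  by rewrite big_distrr; apply: eq_bigr => a _ /=; lia.
by rewrite sum_ord_double_eq; have := ltn_ord y; lia.
Qed.

Lemma level_count_ltn_eqn N M T : odd T -> N.*2 <= T.+1 -> T <= M.*2.+1 ->
  level_count ltn eqn N M T = odd_pairs N.+1.
Proof.
move=> oddT leNT leTM; rewrite /level_count /odd_pairs; apply: eq_bigr => a _.
under eq_bigr => x _.
  under eq_bigr => b _.
    under eq_bigr => y _ do rewrite andbCA.
    rewrite (sum_ord_eqn_and _ _ (fun y => (a < b) && (a + x + b + y == T))) ltn_ord.
    over.
  over.
rewrite exchange_big /=; apply: eq_bigr => b _.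
have -> : \sum_(x < M.+1) ([&& a < b & a + x + b + x == T] : nat)
        = (a < b) * \sum_(x < M.+1) (x.*2 + (a + b) == T : nat).
  by rewrite big_distrr; apply: eq_bigr => x _ /=; lia.
by rewrite sum_ord_double_eq; have := ltn_ord b; lia.
Qed.

Lemma sum_ord_odd_add (m c : nat) :
  \sum_(u < m) (odd (u + c) : nat) = (m + odd c)./2.
Proof.
elim: m => [|m IH]; first by rewrite big_ord0; case: odd.
by rewrite big_ord_recr /= IH; lia.
Qed.

Lemma odd_pairsS m : odd_pairs m.+1 = odd_pairs m + m.+1./2.
Proof.
rewrite /odd_pairs big_ord_recr /= [X in _ + X]big1 ?addn0; last first.
  by move=> v _; have := ltn_ord v; lia.
have -> : uphalf m = (m + odd m)./2 by lia.
rewrite -sum_ord_odd_add -big_split /=; apply: eq_bigr => u _.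
by rewrite big_ord_recr /=; congr (_ + _); have := ltn_ord u; lia.
Qed.

Lemma odd_pairsE m : odd_pairs m = m./2 * m.+1./2.
Proof.
elim: m => [|m IH]; first by rewrite /odd_pairs big_ord0.
rewrite odd_pairsS IH; have -> : m.+2./2 = m./2 + 1 by lia.
nia.
Qed.

Lemma odd_pairs_consecutive m : odd_pairs m + odd_pairs m.+1 = 'C(m.+1, 2).
Proof.
elim: m => [|m IH]; first by rewrite /odd_pairs !big_ord_recr !big_ord0.
by rewrite binS bin1 -IH !odd_pairsS; lia.
Qed.

Lemma level_count_middle_succ n : level_count leq leq n.+1 n n.*2.+1 = 'C(n + 3, 3).
Proof.
elim: n => [|n IH]; first by rewrite /level_count !big_ord_recr !big_ord0.
rewrite doubleS level_count_split level_count_shift IH.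
rewrite level_count_eqn_leq ?level_count_ltn_eqn /= ?odd_double //; try lia.
by rewrite -addnA odd_pairs_consecutive addSn binS addn3.
Qed.

Lemma level_count_middle n :
  level_count leq leq n.+1 n.+1 n.*2.+1 + odd_pairs (n + 3) = 'C(n + 4, 3).
Proof.
elim: n => [|n IH]; first by rewrite /level_count /odd_pairs !big_ord_recr !big_ord0.
rewrite doubleS level_count_split level_count_shift.
rewrite level_count_eqn_leq ?level_count_ltn_eqn /= ?odd_double //; try lia.
rewrite !addSn binS -IH !addn3 addn4 -(odd_pairs_consecutive n.+3); lia.
Qed.

Lemma R_card_odd N M T : odd T -> R_card N M T = level_count leq leq N M T.
Proof.
move=> oddT; rewrite /R_card /level_count -sum1_card big_mkcond /= !pair_bigA /=.
apply: eq_bigr => [[[[a x] b] y]] _; rewrite inE /= xpair_eqE.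
by case: ifP => /=; lia.
Qed.

Theorem lemma7p8 (n : nat) : (2 <= n)%N ->
  SR n.+1 n = 'C(n + 3, 3) /\
  SR n n = 'C(n + 3, 3) - ((n + 2) %/ 2) * ((n + 3) %/ 2).
Proof.
case: n => [//|k] _; rewrite /SR.
have -> : odd (k.+2 + k.+1) by lia.
have -> : odd (k.+1 + k.+1) = false by lia.
have -> : k.+2 + k.+1 = k.+1.*2.+1 by lia.
have -> : k.+1 + k.+1 - 1 = k.*2.+1 by lia.
rewrite !R_card_odd ?oddS ?odd_double // level_count_middle_succ; split=> //.
have := level_count_middle k; rewrite odd_pairsE !addSn addn2 !addn3 addn4 !divn2; lia.
Qed.
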